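(* Let $\phi:M_2\to M_2$ be a linear map with $\sigma_{\mathcal{K}}(\phi(A))=\sigma_{\mathcal{K}}(A)$ for all $A\in M_2$. Then there exist $b\ge 0$ and signs $s,t\in\{1,-1\}$ such that $$\phi(E_{21})=\begin{bmatrix} s\sqrt{b^2+b} & -t\,b\\ t(b+1) & -s\sqrt{b^2+b}\end{bmatrix}.$$
   Context: $M_2$: real $2\times2$ matrices; $E_{21}$ is the matrix with $1$ in position $(2,1)$ and $0$ elsewhere. Lorentz cone $\mathcal{K}=\{(x_1,x_2)^T:|x_1|\le x_2\}$; a real $\lambda$ is an L-eigenvalue of $A$ if there is a nonzero $x\in\mathcal{K}$ with $(A-\lambda I)x\in\mathcal{K}$ and $x^T(A-\lambda I)x=0$; $\sigma_{\mathcal{K}}(A)$ is the set of L-eigenvalues. *)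

From HB Require Import structures.
From mathcomp Require Import all_boot all_order all_algebra.
Set Implicit Arguments. Unset Strict Implicit. Unset Printing Implicit Defensive.
Import Order.TTheory GRing.Theory Num.Theory.
Local Open Scope ring_scope.

Definition lorentz {R : realDomainType} (x : 'cV[R]_2) : Prop :=
  `|x ord0 ord0| <= x (lift ord0 ord0) ord0.

Definition L_eig {R : realDomainType} (A : 'M[R]_2) (lam : R) : Prop :=
  exists x : 'cV[R]_2, x != 0 /\ lorentz x /\
    lorentz ((A - lam%:M) *m x) /\ (x^T *m ((A - lam%:M) *m x)) = 0.

Definition L_spec {R : realDomainType} (A : 'M[R]_2) : R -> Prop := L_eig A.

Definition E21 {R : realDomainType} : 'M[R]_2 := delta_mx (lift ord0 ord0) ord0.

From HB Require Import structures.
From mathcomp Require Import all_boot all_order all_algebra.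
From mathcomp Require Import reals.
From mathcomp Require Import ring lra.
Set Implicit Arguments.
Unset Strict Implicit.
Unset Printing Implicit Defensive.
Import Order.TTheory GRing.Theory Num.Theory.
Local Open Scope ring_scope.

(* The substitution x = u (1, 1) + v (-1, 1) maps the nonnegative quadrant onto
   the Lorentz cone, so the L-eigenvalues of A are the Pareto (complementarity)
   eigenvalues of B = P^-1 A P with P = [[1, -1], [1, 1]].  The L-spectra of E21
   and of -E21 are both {0, 1/2}; as phi (-E21) = - phi E21, the Pareto spectra of
   B and -B are {0, 1/2} for B the transform of phi E21.  A diagonal entry of B is
   a Pareto eigenvalue as soon as the off-diagonal entry in its column is
   nonnegative, and Pareto eigenvalues of a nonnegative (nonpositive) matrix are
   nonnegative (nonpositive); this forces the off-diagonal entries of B to have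
   strictly opposite signs, then the diagonal of B to be +-(1/2, -1/2) and, from the
   eigenvalue 0, det B = 0.  Back in the original coordinates, phi E21 is traceless
   and singular with off-diagonal sum +-1, which is the stated shape. *)

Local Notation i0 := (ord0 : 'I_2).
Local Notation i1 := (lift ord0 ord0 : 'I_2).

Section ParetoEigenvalues.
Variable R : realFieldType.
Implicit Types a b c d lam u v : R.

Definition pareto_eig a b c d lam : Prop := exists u v,
  0 <= u /\ 0 <= v /\ 0 < u + v /\
  0 <= (a - lam) * u + b * v /\ 0 <= c * u + (d - lam) * v /\
  u * ((a - lam) * u + b * v) + v * (c * u + (d - lam) * v) = 0.

Lemma pareto_eig_swap a b c d lam :
  pareto_eig a b c d lam -> pareto_eig d c b a lam.
Proof.
case=> u [v [u0 [v0 [uv [p0 [q0 e]]]]]]; exists v, u.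
by do !split; lra.
Qed.

Lemma pareto_eig_swapE a b c d lam :
  pareto_eig a b c d lam <-> pareto_eig d c b a lam.
Proof. by split; apply: pareto_eig_swap. Qed.

Lemma pareto_eig_diagl a b c d : 0 <= c -> pareto_eig a b c d a.
Proof. by move=> c0; exists 1, 0; do !split; lra. Qed.

Lemma pareto_eig_diagr a b c d : 0 <= b -> pareto_eig a b c d d.
Proof. by move=> b0; apply: pareto_eig_swap; apply: pareto_eig_diagl. Qed.

Lemma pareto_eig_rayleigh a b c d lam : pareto_eig a b c d lam ->
  exists u v, 0 <= u /\ 0 <= v /\ 0 < u ^+ 2 + v ^+ 2 /\
    a * u ^+ 2 + (b + c) * (u * v) + d * v ^+ 2 = lam * (u ^+ 2 + v ^+ 2).
Proof.
case=> u [v [u0 [v0 [uv [_ [_ e]]]]]]; exists u, v; do !split => //.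
  have : 0 < (u + v) ^+ 2 by rewrite exprn_gt0.
  have : 0 <= (u - v) ^+ 2 by rewrite sqr_ge0.
  lra.
by apply/eqP; rewrite -subr_eq0 -e; apply/eqP; ring.
Qed.

Lemma pareto_eig_ge0 a b c d lam : 0 <= a -> 0 <= b -> 0 <= c -> 0 <= d ->
  pareto_eig a b c d lam -> 0 <= lam.
Proof.
move=> a0 b0 c0 d0 /pareto_eig_rayleigh [u [v [u0 [v0 [s0 e]]]]].
rewrite -(pmulr_lge0 _ s0) -e.
by rewrite !addr_ge0 ?mulr_ge0 ?addr_ge0 ?exprn_ge0.
Qed.

Lemma pareto_eig_le0 a b c d lam : a <= 0 -> b <= 0 -> c <= 0 -> d <= 0 ->
  pareto_eig a b c d lam -> lam <= 0.
Proof.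
move=> a0 b0 c0 d0 /pareto_eig_rayleigh [u [v [u0 [v0 [s0 e]]]]].
rewrite -(pmulr_lle0 _ s0) -e.
have : a * u ^+ 2 <= 0 by rewrite mulr_le0_ge0 ?exprn_ge0.
have : (b + c) * (u * v) <= 0 by rewrite mulr_le0_ge0 ?mulr_ge0 //; lra.
have : d * v ^+ 2 <= 0 by rewrite mulr_le0_ge0 ?exprn_ge0.
lra.
Qed.

Lemma pareto_eig_offdiag_mixed a b c d lam : b < 0 -> 0 < c -> pareto_eig a b c d lam ->
  lam <= a /\ (lam = a \/ (a - lam) * (d - lam) = b * c).
Proof.
move=> b0 c0 [u [v [u0 [v0 [uv [p0 [q0 e]]]]]]].
have up0 : u * ((a - lam) * u + b * v) = 0 by nra.
have vq0 : v * (c * u + (d - lam) * v) = 0 by nra.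
have [v00|vn0] := eqVneq v 0.
  have un0 : u != 0 by apply/eqP; lra.
  move: up0; rewrite v00 mulr0 addr0 mulrCA => /eqP.
  rewrite !mulf_eq0 (negbTE un0) subr_eq0 => /orP[/eqP <-|//].
  by split; [rewrite lexx | left].
have {vq0} q0' : c * u + (d - lam) * v = 0.
  by move/eqP: vq0; rewrite mulf_eq0 (negbTE vn0) => /eqP.
have un0 : u != 0 by apply/eqP => u00; move: p0; rewrite u00; nra.
have {up0} p0' : (a - lam) * u + b * v = 0.
  by move/eqP: up0; rewrite mulf_eq0 (negbTE un0) => /eqP.
split; first nra.
right; apply/eqP; rewrite -subr_eq0; apply/eqP.
apply: (mulIf (mulf_neq0 un0 vn0)); rewrite mul0r.
transitivity (((a - lam) * u) * ((d - lam) * v) - (b * v) * (c * u)); first ring.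
have -> : (a - lam) * u = - (b * v) by lra.
have -> : (d - lam) * v = - (c * u) by lra.
ring.
Qed.

Definition pareto_spec_0_half a b c d : Prop :=
  forall lam, pareto_eig a b c d lam <-> lam = 0 \/ lam = 1/2.

Lemma pareto_spec_0_half_swap a b c d :
  pareto_spec_0_half a b c d -> pareto_spec_0_half d c b a.
Proof. by move=> spec lam; rewrite -pareto_eig_swapE. Qed.

Section SpectrumZeroHalf.
Variables a b c d : R.
Hypothesis specB : pareto_spec_0_half a b c d.
Hypothesis specNB : pareto_spec_0_half (-a) (-b) (-c) (-d).

Lemma pareto_spec_0_half_not_offdiag_ge0 : 0 <= b -> 0 <= c -> False.
Proof.
move=> b0 c0.
have /specB a01 : pareto_eig a b c d a by apply: pareto_eig_diagl.
have /specB d01 : pareto_eig a b c d d by apply: pareto_eig_diagr.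
have a_ge0 : 0 <= a by case: a01 => ->; lra.
have d_ge0 : 0 <= d by case: d01 => ->; lra.
have : 1/2 <= 0 :> R.
  by apply: (pareto_eig_le0 _ _ _ _ ((specNB _).2 (or_intror erefl))); rewrite oppr_le0.
lra.
Qed.

Lemma pareto_spec_0_half_offdiag_mixed :
  b < 0 -> 0 < c -> a = 1/2 /\ d = -(1/2) /\ a * d = b * c.
Proof.
move=> b0 c0.
have specNB' := pareto_spec_0_half_swap specNB.
have [half_le_a _] := pareto_eig_offdiag_mixed b0 c0 ((specB _).2 (or_intror erefl)).
have a_half : a = 1/2.
  have /specB a01 : pareto_eig a b c d a by apply/pareto_eig_diagl/ltW.
  by case: a01 => a01; lra.
have Nc_lt0 : -c < 0 by rewrite oppr_lt0.
have Nb_gt0 : 0 < -b by rewrite oppr_gt0.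
have [half_le_Nd _] :=
  pareto_eig_offdiag_mixed Nc_lt0 Nb_gt0 ((specNB' _).2 (or_intror erefl)).
have d_Nhalf : d = -(1/2).
  have /specNB' Nd01 : pareto_eig (-d) (-c) (-b) (-a) (-d).
    by apply/pareto_eig_diagl/ltW.
  by case: Nd01 => Nd01; lra.
have [_ [|]] := pareto_eig_offdiag_mixed b0 c0 ((specB 0).2 (or_introl erefl)).
  lra.
by rewrite !subr0.
Qed.

End SpectrumZeroHalf.

Lemma pareto_spec_0_half_classify a b c d :
  pareto_spec_0_half a b c d -> pareto_spec_0_half (-a) (-b) (-c) (-d) ->
  exists t, (t = 1 \/ t = -1) /\ a = t / 2 /\ d = - (t / 2) /\ a * d = b * c /\
    t * b < 0 /\ 0 < t * c.
Proof.
move=> specB specNB.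
have specNB' : pareto_spec_0_half (- - a) (- - b) (- - c) (- - d) by rewrite !opprK.
have offdiag_le0 : b <= 0 -> c <= 0 -> False.
  by move=> b0 c0; apply: (pareto_spec_0_half_not_offdiag_ge0 specNB specNB'); lra.
have [b_lt0|b_gt0|b0] := ltgtP b 0.
- have c_gt0 : 0 < c by rewrite ltNge; apply/negP => /(offdiag_le0 (ltW b_lt0)).
  have [-> [-> adbc]] := pareto_spec_0_half_offdiag_mixed specB specNB b_lt0 c_gt0.
  by exists 1; split; [left | do !split; lra].
- have c_lt0 : c < 0.
    by rewrite ltNge; apply/negP => /(pareto_spec_0_half_not_offdiag_ge0 specB specNB (ltW b_gt0)).
  have [-> [-> adbc]] := pareto_spec_0_half_offdiag_mixed
    (pareto_spec_0_half_swap specB) (pareto_spec_0_half_swap specNB) c_lt0 b_gt0.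
  by exists (-1); split; [right | do !split; lra].
- have [c_ge0|c_lt0] := leP 0 c.
    by case: (pareto_spec_0_half_not_offdiag_ge0 specB specNB); rewrite ?b0.
  by case: offdiag_le0; rewrite ?b0 // ltW.
Qed.

End ParetoEigenvalues.

Lemma ord2_ind (P : 'I_2 -> Prop) : P i0 -> P i1 -> forall i, P i.
Proof.
move=> P0 P1 [[|[|//]] lt_i2].
  by rewrite (_ : Ordinal lt_i2 = i0) //; apply: val_inj.
by rewrite (_ : Ordinal lt_i2 = i1) //; apply: val_inj.
Qed.

Section LorentzCoordinates.
Variable R : realFieldType.
Implicit Types (u v p q lam : R) (x y : 'cV[R]_2) (A : 'M[R]_2).

Lemma col2P x y : x i0 0 = y i0 0 -> x i1 0 = y i1 0 -> x = y.
Proof. by move=> e0 e1; apply/matrixP => i j; rewrite (ord1 j); elim/ord2_ind: i. Qed.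

Lemma mulmx_col2E (B : 'M[R]_2) x i : (B *m x) i 0 = B i i0 * x i0 0 + B i i1 * x i1 0.
Proof. by rewrite mxE big_ord_recl big_ord1. Qed.

Lemma mx11_eq0 (M : 'M[R]_1) : M = 0 <-> M 0 0 = 0.
Proof.
split=> [-> | e]; first by rewrite mxE.
by apply/matrixP => i j; rewrite !ord1 e mxE.
Qed.

(* Coordinates along the boundary rays (1, 1) and (-1, 1) of the Lorentz cone. *)
Definition cone_vec u v : 'cV[R]_2 := \col_i (if i == i0 then u - v else u + v).

Lemma cone_vecK x : cone_vec ((x i1 0 + x i0 0) / 2) ((x i1 0 - x i0 0) / 2) = x.
Proof. by apply: col2P; rewrite mxE /=; field. Qed.

Lemma lorentz_cone_vec u v : lorentz (cone_vec u v) <-> 0 <= u /\ 0 <= v.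
Proof.
rewrite /lorentz !mxE /= ler_norml.
by split=> [/andP[h1 h2] | [u0 v0]]; [split | apply/andP; split]; lra.
Qed.

Lemma cone_vec_neq0 u v : 0 <= u -> 0 <= v -> cone_vec u v != 0 <-> 0 < u + v.
Proof.
move=> u0 v0; split=> [uv_neq0 | uv_gt0].
  rewrite lt_def addr_ge0 // andbT; apply/eqP => uv0; move/eqP: uv_neq0; apply.
  by apply: col2P; rewrite !mxE /=; lra.
apply/eqP => /(congr1 (fun y : 'cV[R]_2 => y i1 0)); rewrite !mxE /=; lra.
Qed.

Lemma dotmx_cone_vec u v p q :
  ((cone_vec u v)^T *m cone_vec p q) 0 0 = 2 * (u * p + v * q).
Proof. by rewrite mxE big_ord_recl big_ord1 !mxE /=; ring. Qed.

(* The entries a, b, c, d are those of P^-1 A P. *)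
Lemma mulmx_cone_vec A lam u v :
  let a := (A i0 i0 + A i0 i1 + A i1 i0 + A i1 i1) / 2 in
  let b := (A i0 i1 + A i1 i1 - A i0 i0 - A i1 i0) / 2 in
  let c := (A i1 i0 + A i1 i1 - A i0 i0 - A i0 i1) / 2 in
  let d := (A i0 i0 - A i0 i1 - A i1 i0 + A i1 i1) / 2 in
  (A - lam%:M) *m cone_vec u v = cone_vec ((a - lam) * u + b * v) (c * u + (d - lam) * v).
Proof.
by apply: col2P; rewrite !mulmx_col2E !mxE /= ?mulr1n ?mulr0n; field.
Qed.

Lemma L_eig_pareto A lam :
  L_eig A lam <-> pareto_eig
    ((A i0 i0 + A i0 i1 + A i1 i0 + A i1 i1) / 2) ((A i0 i1 + A i1 i1 - A i0 i0 - A i1 i0) / 2)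
    ((A i1 i0 + A i1 i1 - A i0 i0 - A i0 i1) / 2) ((A i0 i0 - A i0 i1 - A i1 i0 + A i1 i1) / 2)
    lam.
Proof.
have Acone u v := mulmx_cone_vec A lam u v; rewrite /= in Acone.
split.
- case=> x [x_neq0 [x_cone [y_cone dot0]]].
  have [u [v x_uv]] : exists u v, x = cone_vec u v.
    by exists ((x i1 0 + x i0 0) / 2), ((x i1 0 - x i0 0) / 2); rewrite cone_vecK.
  rewrite x_uv Acone in x_neq0 x_cone y_cone dot0.
  move: x_cone y_cone => /lorentz_cone_vec [u0 v0] /lorentz_cone_vec [p0 q0].
  move/mx11_eq0: dot0; rewrite dotmx_cone_vec => dot0.
  exists u, v; do !split=> //; last lra.
  exact/(cone_vec_neq0 u0 v0).
- case=> u [v [u0 [v0 [uv [p0 [q0 e]]]]]].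
  exists (cone_vec u v); rewrite Acone; do !split.
  + exact/(cone_vec_neq0 u0 v0).
  + exact/lorentz_cone_vec.
  + exact/lorentz_cone_vec.
  + by apply/mx11_eq0; rewrite dotmx_cone_vec e mulr0.
Qed.

End LorentzCoordinates.

Section E21.
Variable R : realFieldType.

Lemma pareto_spec_0_half_E21 :
  pareto_spec_0_half (1/2 : R) (-(1/2)) (1/2) (-(1/2)).
Proof.
move=> lam; split.
  case/pareto_eig_offdiag_mixed; [lra | lra | move=> _ [->|]]; first by right.
  by left; nra.
case=> ->; last by apply: pareto_eig_diagl; lra.
by exists 1, 1; do !split; lra.
Qed.

Lemma L_eig_E21 (lam : R) : L_eig E21 lam <-> lam = 0 \/ lam = 1/2.
Proof.
rewrite L_eig_pareto /E21 !mxE /= !(mulr1n, oppr0, add0r, addr0, subr0, sub0r) mulNr.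
exact: pareto_spec_0_half_E21 lam.
Qed.

Lemma L_eig_oppE21 (lam : R) : L_eig (- E21) lam <-> lam = 0 \/ lam = 1/2.
Proof.
rewrite L_eig_pareto /E21 !mxE /= !(mulr1n, oppr0, opprK, add0r, addr0, subr0, sub0r) mulNr.
exact: pareto_spec_0_half_swap pareto_spec_0_half_E21 lam.
Qed.

End E21.

Lemma L_spec_0_half_classify (R : realFieldType) (M : 'M[R]_2) :
  (forall lam, L_eig M lam <-> lam = 0 \/ lam = 1/2) ->
  (forall lam, L_eig (- M) lam <-> lam = 0 \/ lam = 1/2) ->
  exists t, (t = 1 \/ t = -1) /\ M i0 i0 + M i1 i1 = 0 /\ M i0 i1 + M i1 i0 = t /\
    M i0 i0 * M i1 i1 = M i0 i1 * M i1 i0 /\ 0 < t * (M i1 i0 - M i0 i1).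
Proof.
move=> specM specNM.
set m00 := M i0 i0; set m01 := M i0 i1; set m10 := M i1 i0; set m11 := M i1 i1.
set a := (m00 + m01 + m10 + m11) / 2; set b := (m01 + m11 - m00 - m10) / 2.
set c := (m10 + m11 - m00 - m01) / 2; set d := (m00 - m01 - m10 + m11) / 2.
have specB : pareto_spec_0_half a b c d by move=> lam; rewrite -specM L_eig_pareto.
have specNB : pareto_spec_0_half (- a) (- b) (- c) (- d).
  by move=> lam; rewrite -specNM L_eig_pareto !mxE -!mulNr !opprD.
have [t [t_pm1 [a_t [d_t [adbc [tb tc]]]]]] := pareto_spec_0_half_classify specB specNB.
have trE : a + d = m00 + m11 by rewrite /a /d; field.
have skewE : a - d = m01 + m10 by rewrite /a /d; field.
have detE : a * d - b * c = m00 * m11 - m01 * m10 by rewrite /a /b /c /d; field.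
have signE : t * c - t * b = t * (m10 - m01) by rewrite /b /c; field.
by exists t; do !split=> //; lra.
Qed.

Definition E21_image (R : rcfType) (b s t : R) : 'M[R]_2 :=
  \matrix_(i < 2, j < 2)
    (if i == ord0 then
       (if j == ord0 then s * Num.sqrt (b ^+ 2 + b) else - (t * b))
     else
       (if j == ord0 then t * (b + 1) else - (s * Num.sqrt (b ^+ 2 + b)))).

Lemma eq_E21_image (R : rcfType) (M : 'M[R]_2) t :
  t = 1 \/ t = -1 -> M i0 i0 + M i1 i1 = 0 -> M i0 i1 + M i1 i0 = t ->
  M i0 i0 * M i1 i1 = M i0 i1 * M i1 i0 -> 0 < t * (M i1 i0 - M i0 i1) ->
  exists b s, 0 <= b /\ (s = 1 \/ s = -1) /\ M = E21_image b s t.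
Proof.
move=> t_pm1 tr0 skew det0 sign.
set b := - (t * M i0 i1).
have tt1 : t * t = 1 by case: t_pm1 => ->; rewrite ?mulrNN mulr1.
have m01E : M i0 i1 = - (t * b) by rewrite /b mulrN opprK mulrA tt1 mul1r.
have m10E : M i1 i0 = t * (b + 1) by rewrite mulrDr mulr1; lra.
have m11E : M i1 i1 = - M i0 i0 by lra.
have m00_sq : M i0 i0 ^+ 2 = b ^+ 2 + b.
  rewrite expr2 -[M i0 i0 * _]opprK -mulrN -m11E det0 m01E m10E mulNr opprK.
  by rewrite mulrACA tt1 mul1r; ring.
have b_ge0 : 0 <= b.
  have : t * (M i1 i0 - M i0 i1) = t * t * (2 * b + 1) by rewrite m10E m01E; ring.
  rewrite tt1 mul1r => signE.
  have := sqr_ge0 (M i0 i0); nra.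
exists b, ((-1) ^+ (M i0 i0 < 0)%R); split=> //; split.
  by case: (M i0 i0 < 0)%R; [right | left]; rewrite ?expr1 ?expr0.
have sqrtE : Num.sqrt (b ^+ 2 + b) = `|M i0 i0| by rewrite -m00_sq sqrtr_sqr.
apply/matrixP=> i j; rewrite mxE sqrtE -numEsign.
by elim/ord2_ind: i; elim/ord2_ind: j.
Qed.

Theorem lemma4p5 (R : realType) (phi : {linear 'M[R]_2 -> 'M[R]_2}) :
  (forall A : 'M[R]_2, forall lam : R, L_spec (phi A) lam <-> L_spec A lam) ->
  exists b : R, exists s t : R,
    0 <= b /\ (s = 1 \/ s = -1) /\ (t = 1 \/ t = -1) /\
    phi E21 = \matrix_(i < 2, j < 2)
      (if i == ord0 then
         (if j == ord0 then s * Num.sqrt (b ^+ 2 + b) else - (t * b))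
       else
         (if j == ord0 then t * (b + 1) else - (s * Num.sqrt (b ^+ 2 + b)))).
Proof.
move=> phi_spec.
have specM lam : L_eig (phi E21) lam <-> lam = 0 \/ lam = 1/2.
  exact: iff_trans (phi_spec E21 lam) (L_eig_E21 lam).
have specNM lam : L_eig (- phi E21) lam <-> lam = 0 \/ lam = 1/2.
  rewrite -raddfN; exact: iff_trans (phi_spec _ lam) (L_eig_oppE21 lam).
have [t [t_pm1 [tr0 [skew [det0 sign]]]]] := L_spec_0_half_classify specM specNM.
have [b [s [b_ge0 [s_pm1 phiE]]]] := eq_E21_image t_pm1 tr0 skew det0 sign.
by exists b, s, t.
Qed.
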